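(* Let $q$ be a prime power and $\lambda\in(0,1)$ be such that $\lambda q$ is a positive integer. Then there exists a coded caching scheme with linear subpacketization $F=K$, where the number of users satisfies $K\le \frac{q^{2\lambda^2q^2}}{(\lambda q)!}$, with cache fraction $\frac{M}{N}\le\lambda$ and global caching gain $\gamma\ge\frac{4^{\lambda q}}{2\sqrt{\lambda q}}$ (the rate being $R=K(1-\frac{M}{N})/\gamma$).
   Context: Coded caching setup: a server holds $N$ files $W_1,\dots,W_N$ and is connected by an error-free broadcast link to $K$ users, each having a cache able to store $M$ files; it is assumed throughout that $N\ge K$. Each file is split into $F$ equal-size subfiles ($F$ is the subpacketization). Caching is done before demands are known and is symmetric: for every user and subfile index $f$, the user caches the $f$-th subfile of either all files or none. In the delivery phase every user demands one file and the server broadcasts transmissions, each of the size of one subfile, so that every user can recover its demanded file from its cache and the transmissions, for every demand vector. The rate $R$ is the number of transmissions divided by $F$, and the global caching gain is $\gamma=K(1-M/N)/R$. *)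

From HB Require Import structures.
From mathcomp Require Import all_boot all_order all_algebra.
From mathcomp Require Import Rstruct.
From Stdlib Require Rdefinitions.
Notation R := Rdefinitions.R.
Set Implicit Arguments. Unset Strict Implicit. Unset Printing Implicit Defensive.
Import Order.TTheory GRing.Theory Num.Theory.

Definition prime_power (q : nat) : Prop :=
  exists p e : nat, prime p /\ (0 < e)%N /\ q = (p ^ e)%N.

(* A library of N files, each split into F subfiles whose contents lie in
   a finite alphabet A (a subfile = one symbol of A): W n f = f-th subfile
   of file n. *)
Definition library (N F : nat) (A : Type) := 'I_N -> 'I_F -> A.

(* Symmetric placement: Z k is the set of subfile indices f such that user k
   caches the f-th subfile of every file. *)
Definition same_cache (N F K : nat) (A : Type) (Z : 'I_K -> {set 'I_F})
  (k : 'I_K) (W W' : library N F A) : Prop :=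
  forall (n : 'I_N) (f : 'I_F), f \in Z k -> W n f = W' n f.

(* A delivery scheme with T transmissions, each of the size of one subfile
   (an element of A), for placement Z: for every demand vector d, the
   transmissions X d j are arbitrary functions of the library, and every
   user k can recover its demanded file W (d k) from its cache and the
   transmissions, i.e. W (d k) is a function of (cache of k, transmissions). *)
Definition valid_delivery (N F K T : nat) (A : Type) (Z : 'I_K -> {set 'I_F})
  (X : ('I_K -> 'I_N) -> 'I_T -> library N F A -> A) : Prop :=
  forall (d : 'I_K -> 'I_N) (k : 'I_K) (W W' : library N F A),
    same_cache Z k W W' ->
    (forall j : 'I_T, X d j W = X d j W') ->
    forall f : 'I_F, W (d k) f = W' (d k) f.

Definition caching_scheme (K F T : nat) (Z : 'I_K -> {set 'I_F}) : Prop :=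
  forall (N : nat) (A : finType), (K <= N)%N ->
    exists X : ('I_K -> 'I_N) -> 'I_T -> library N F A -> A,
      valid_delivery Z X.

Definition cache_fraction_ok (K F : nat) (Z : 'I_K -> {set 'I_F}) (mu : R) :=
  forall k : 'I_K, (#|Z k|%:R <= mu * F%:R)%R.

Definition rate (F T : nat) : R := (T%:R / F%:R)%R.
Definition gain (K F T : nat) (mu : R) : R := (K%:R * (1 - mu) / rate F T)%R.

(* Users and subfiles are both indexed by the m-subsets of an n-set, n = m q,
   and user U caches every subfile whose index meets U.  For each 2m-subset S
   the server sends the sum, in Z/|A|Z, of the subfiles W_{d(U)}(S \ U) over
   the m-subsets U of S.  A subfile V missed by user U is disjoint from U; in
   the transmission for S = U ∪ V every other summand W_{d(U')}(S \ U') has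
   S \ U' meeting U, hence is cached, so U recovers W_{d(U)}(V).
   Thus K = F = C(n,m), the cache fraction is 1 - C(n-m,m)/C(n,m) <= m/q
   because C(n,m) - C(n-m,m) <= m C(n-1,m-1), and the gain is
   C(n,m) C(n-m,m) / C(n,2m) = C(2m,m) >= 4^m / (2 sqrt m).  Finally
   K <= (mq)^m / m! <= q^(2m^2) / m!. *)

From mathcomp Require Import all_boot all_order all_algebra.
From mathcomp Require Import Rstruct.
From mathcomp Require Import zify ring.
Set Implicit Arguments. Unset Strict Implicit. Unset Printing Implicit Defensive.
Import Order.TTheory GRing.Theory Num.Theory.

Lemma bin_subn_leq n b k : b <= n ->
  'C(n, k.+1) - 'C(n - b, k.+1) <= b * 'C(n.-1, k).
Proof.
elim: b => [|b IH] b_lt_n; first by rewrite subn0 subnn.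
have le_bin : 'C(n - b.+1, k) <= 'C(n.-1, k) by apply: leq_bin2l; lia.
have binS_sub : 'C(n - b, k.+1) = 'C(n - b.+1, k.+1) + 'C(n - b.+1, k).
  by rewrite -binS; congr 'C(_, _); lia.
have := IH (ltnW b_lt_n); lia.
Qed.

Lemma bin_subn_mul_leq n b k : b <= n ->
  n * ('C(n, k) - 'C(n - b, k)) <= b * k * 'C(n, k).
Proof.
case: k => [|k] le_b_n; first by rewrite !bin0 subnn muln0.
rewrite -mulnA -mul_bin_diag mulnCA leq_mul2l bin_subn_leq ?orbT //.
Qed.

Lemma mul_bin_trinomial n a b : a + b <= n ->
  'C(n, a) * 'C(n - a, b) = 'C(n, a + b) * 'C(a + b, a).
Proof.
move=> le_ab_n.
have facts_gt0 : 0 < a`! * b`! * (n - (a + b))`! by rewrite !muln_gt0 !fact_gt0.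
apply/eqP; rewrite -(eqn_pmul2r facts_gt0); apply/eqP.
have e1 := @bin_fact n a ltac:(lia); have e2 := @bin_fact (n - a) b ltac:(lia).
have e3 := bin_fact le_ab_n; have e4 := bin_fact (leq_addr b a).
rewrite subnDA in e3 *; rewrite addKn in e4.
transitivity n`!; first by rewrite -e1 -e2; ring.
by rewrite -e3 -e4; ring.
Qed.

Lemma mul_central_bin m : 'C(m.+1.*2, m.+1) * m.+1 = 2 * m.*2.+1 * 'C(m.*2, m).
Proof.
have diag := mul_bin_diag m.+1.*2 m; have down := mul_bin_down m.*2.+1 m.
rewrite /= doubleS in diag down *.
have e : m.*2.+1 - m = m.+1 by lia.
rewrite e in down.
apply/eqP; rewrite -(eqn_pmul2l (ltn0Sn m)); apply/eqP; nia.
Qed.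

Lemma central_bin_lower m : 16 ^ m.+1 <= 4 * m.+1 * 'C(m.+1.*2, m.+1) ^ 2.
Proof.
elim: m => [//|m IH]; rewrite -(@leq_pmul2r m.+2) //.
have -> : 4 * m.+2 * 'C(m.+2.*2, m.+2) ^ 2 * m.+2
          = 4 * ('C(m.+2.*2, m.+2) * m.+2) ^ 2 by ring.
rewrite mul_central_bin expnS.
have : 4 * m.+1 * m.+2 <= m.+1.*2.+1 ^ 2 by nia.
nia.
Qed.

Lemma ffact_leq_expn n m : n ^_ m <= n ^ m.
Proof.
elim: m => [//|m IH]; rewrite ffactnSr expnSr leq_mul //; exact: leq_subr.
Qed.

Lemma bin_mul_fact_leq m q : 0 < m < q -> 'C(m * q, m) * m`! <= q ^ (2 * m ^ 2).
Proof.
case/andP=> m_gt0 lt_mq; rewrite bin_ffact.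
apply: leq_trans (ffact_leq_expn _ _) _.
apply: leq_trans (_ : (q ^ 2) ^ m <= _).
  by rewrite leq_exp2r // leq_mul2r ltnW ?orbT.
by rewrite -expnM leq_pexp2l; nia.
Qed.

Section SymbolSum.

Variables (A I : finType) (P : pred I).

(* The symbols of A are added as elements of Z/|A|Z through their rank in
   enum A; the default a0 is never returned since the sum is reduced mod |A|. *)
Definition symbol_sum (a0 : A) (F : I -> A) : A :=
  nth a0 (enum A) ((\sum_(i | P i) enum_rank (F i)) %% #|A|).

Lemma symbol_sum_cancel (a0 b0 : A) (F G : I -> A) (i : I) :
    P i -> (forall j, P j -> j != i -> F j = G j) ->
  symbol_sum a0 F = symbol_sum b0 G -> F i = G i.
Proof.
move=> Pi eqFG; rewrite /symbol_sum !(bigD1 i Pi) /=.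
have A_gt0 : 0 < #|A| by apply/card_gt0P; exists (F i).
under eq_bigr => j /andP[Pj neq_ji] do rewrite eqFG //.
rewrite (set_nth_default a0) ?(set_nth_default a0 b0) -?cardE ?ltn_pmod //.
move/eqP; rewrite nth_uniq -?cardE ?ltn_pmod ?enum_uniq // eqn_modDr.
by rewrite !modn_small // => /eqP/ord_inj/enum_rank_inj.
Qed.

End SymbolSum.

Lemma disjoint_setU_uniq (T : finType) (U U' V V' : {set T}) :
    #|U| = #|U'| -> [disjoint U & V] -> [disjoint U' & V'] ->
    U :|: V = U' :|: V' -> [disjoint V' & U] -> U = U' /\ V = V'.
Proof.
move=> eq_card dUV dUV' eqUV dV'U.
have sub_UU' : U \subset U'.
  apply/subsetP => x xU; have : x \in U' :|: V' by rewrite -eqUV inE xU.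
  rewrite inE => /orP[// | xV']; by rewrite (disjointFr dV'U xV') in xU.
have eqUU' : U = U' by apply/eqP; rewrite eqEcard sub_UU' eq_card leqnn.
split=> //; subst U'; apply/setP => x.
move/setP/(_ x): eqUV; rewrite !inE.
by case: (boolP (x \in U)) => // xU; rewrite (disjointFr dUV xU) (disjointFr dUV' xU).
Qed.

Lemma card_preim_enum_val (T : finType) (S : {set T}) (p : pred T) :
  #|[set i : 'I_#|S| | p (enum_val i)]| = #|[set x in S | p x]|.
Proof.
rewrite -(card_imset _ (@enum_val_inj _ _)); apply: eq_card => x.
rewrite inE; apply/imsetP/andP => [[i] | [xS px]].
  by rewrite inE => pi ->; rewrite enum_valP.
by exists (enum_rank_in xS x); rewrite ?inE enum_rankK_in.
Qed.

Definition subsets n k : {set {set 'I_n}} := [set U : {set 'I_n} | #|U| == k].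

Lemma card_subsets n k : #|subsets n k| = 'C(n, k).
Proof. by rewrite card_draws card_ord. Qed.

Lemma card_subsets_disjoint n k (U : {set 'I_n}) :
  #|[set V in subsets n k | [disjoint V & U]]| = 'C(n - #|U|, k).
Proof.
have -> : [set V in subsets n k | [disjoint V & U]]
          = [set V : {set 'I_n} | V \subset ~: U & #|V| == k].
  by apply/setP => V; rewrite !inE disjoints_subset andbC.
rewrite cards_draws; congr 'C(_, _); have := cardsC U; rewrite card_ord; lia.
Qed.

Section MeetScheme.

Variables n m : nat.
Hypothesis le_2m_n : m.*2 <= n.

Local Notation K := #|subsets n m|.

Definition subset_at (i : 'I_K) : {set 'I_n} := enum_val i.

Lemma card_subset_at i : #|subset_at i| = m.
Proof. by apply/eqP; have := enum_valP i; rewrite inE. Qed.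

Definition meet_placement (k : 'I_K) : {set 'I_K} :=
  [set f | ~~ [disjoint subset_at f & subset_at k]].

Definition splits (S : {set 'I_n}) : pred ('I_K * 'I_K) :=
  [pred p | [disjoint subset_at p.1 & subset_at p.2]
            && (subset_at p.1 :|: subset_at p.2 == S)].

Lemma splits_uniq S (k f : 'I_K) p :
    splits S (k, f) -> splits S p -> [disjoint subset_at p.2 & subset_at k] ->
  p = (k, f).
Proof.
case: p => u g; rewrite /splits /= => /andP[dkf /eqP <-] /andP[dug /eqP eqS] dgk.
have [|/enum_val_inj <- /enum_val_inj <-] // :=
  disjoint_setU_uniq _ dkf dug (esym eqS) dgk.
by rewrite !card_subset_at.
Qed.

Lemma meet_scheme : caching_scheme #|subsets n m.*2| meet_placement.
Proof.
move=> N A _.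
have k0 : 'I_K by exists 0; rewrite card_subsets bin_gt0; lia.
exists (fun d j W =>
  symbol_sum (splits (enum_val j)) (W (d k0) k0) (fun p => W (d p.1) p.2)).
move=> d k W W' same_k same_X f.
have [cached | ] := boolP (f \in meet_placement k); first exact: same_k.
rewrite inE negbK => dfk.
have dkf : [disjoint subset_at k & subset_at f] by rewrite disjoint_sym.
set S := subset_at k :|: subset_at f.
have S_in : S \in subsets n m.*2.
  by rewrite inE cardsU !card_subset_at setIC (disjoint_setI0 dfk) cards0 subn0 addnn.
have split_kf : splits S (k, f) by rewrite /splits /= dkf eqxx.
have := same_X (enum_rank_in S_in S); rewrite enum_rankK_in //.
apply: (symbol_sum_cancel (i := (k, f)) (F := fun p => W (d p.1) p.2)) => //.
move=> p Sp ne_p; apply: same_k; rewrite inE; apply: contra ne_p => dpk.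
by apply/eqP; apply: (@splits_uniq S) => //.
Qed.

Lemma card_meet_placement k : #|meet_placement k| = ('C(n, m) - 'C(n - m, m))%N.
Proof.
have := cardsC (meet_placement k).
have -> : ~: meet_placement k = [set f : 'I_K | [disjoint subset_at f & subset_at k]].
  by apply/setP => f; rewrite !inE negbK.
rewrite (@card_preim_enum_val _ (subsets n m) (fun V => [disjoint V & subset_at k])).
rewrite card_subsets_disjoint card_subset_at card_ord.
have := card_subsets n m; lia.
Qed.

Local Open Scope ring_scope.

Definition meet_fraction : R := 1 - 'C(n - m, m)%:R / 'C(n, m)%:R.

Let binR_gt0 : 0 < 'C(n, m)%:R :> R.
Proof. by rewrite ltr0n bin_gt0; lia. Qed.

Lemma meet_cache_fraction : cache_fraction_ok meet_placement meet_fraction.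
Proof.
move=> k; rewrite card_meet_placement card_subsets natrB ?leq_bin2l ?leq_subr //.
by rewrite mulrBl mul1r divfK ?gt_eqF ?binR_gt0.
Qed.

Lemma meet_fraction_ge0 : 0 <= meet_fraction.
Proof.
by rewrite subr_ge0 ler_pdivrMr ?binR_gt0 // mul1r ler_nat leq_bin2l ?leq_subr.
Qed.

Lemma gain_meet_scheme : gain K K #|subsets n m.*2| meet_fraction = 'C(m.*2, m)%:R.
Proof.
have bin2m_gt0 : 0 < 'C(n, m.*2)%:R :> R by rewrite ltr0n bin_gt0.
have -> : 'C(m.*2, m)%:R = 'C(n, m)%:R * 'C(n - m, m)%:R / 'C(n, m.*2)%:R :> R.
  rewrite -natrM mul_bin_trinomial addnn ?addnn // natrM.
  by rewrite mulrAC divff ?mul1r // gt_eqF.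
rewrite /gain /rate /meet_fraction !card_subsets subKr.
by field; rewrite !gt_eqF ?binR_gt0.
Qed.

End MeetScheme.

Local Open Scope ring_scope.

Lemma meet_fraction_le m q : (0 < m)%N -> (0 < q)%N ->
  meet_fraction (m * q) m <= m%:R / q%:R.
Proof.
move=> m_gt0 q_gt0; set n := (m * q)%N.
have C_gt0 : 0 < 'C(n, m)%:R :> R by rewrite ltr0n bin_gt0 leq_pmulr.
have nat_le : (q * ('C(n, m) - 'C(n - m, m)) <= m * 'C(n, m))%N.
  rewrite -(leq_pmul2l m_gt0) mulnA mulnA.
  by apply: bin_subn_mul_leq; rewrite leq_pmulr.
have -> : meet_fraction n m = ('C(n, m) - 'C(n - m, m))%:R / 'C(n, m)%:R.
  by rewrite natrB ?leq_bin2l ?leq_subr // mulrBl divff ?lt0r_neq0.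
by rewrite ler_pdivrMr // mulrAC ler_pdivlMr ?ltr0n // -!natrM ler_nat mulnC.
Qed.

Lemma central_bin_ge (F : rcfType) m : (0 < m)%N ->
  4%:R ^+ m / (2%:R * Num.sqrt m%:R) <= 'C(m.*2, m)%:R :> F.
Proof.
case: m => [//|m] _.
have sqrt_gt0 : 0 < Num.sqrt m.+1%:R :> F by rewrite sqrtr_gt0 ltr0n.
rewrite ler_pdivrMr ?mulr_gt0 ?ltr0n //.
rewrite -(ler_pXn2r (n := 2)) // ?nnegrE ?mulr_ge0 ?ler0n ?exprn_ge0 ?sqrtr_ge0 //.
rewrite !exprMn sqr_sqrtr ?ler0n // -!natrX -!natrM ler_nat -expnM mulnC expnM.
have -> : ('C(m.+1.*2, m.+1) ^ 2 * (2 ^ 2 * m.+1)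
          = 4 * m.+1 * 'C(m.+1.*2, m.+1) ^ 2)%N by ring.
exact: central_bin_lower.
Qed.

(* lambda * q = m (a positive integer), so q^(2 lambda^2 q^2) = q^(2 m^2). *)
Theorem corollary2 (q : nat) (lambda : R) (m : nat) :
  prime_power q ->
  0 < lambda -> lambda < 1 ->
  (0 < m)%N -> lambda * q%:R = m%:R ->
  exists (K T : nat) (Z : 'I_K -> {set 'I_K}) (mu : R),
    caching_scheme T Z /\
    cache_fraction_ok Z mu /\
    0 <= mu /\ mu <= lambda /\
    (K%:R : R) <= q%:R ^+ (2 * m ^ 2) / (m`!)%:R /\
    gain K K T mu >= 4%:R ^+ m / (2%:R * Num.sqrt (m%:R : R)).
Proof.
move=> _ lambda_gt0 lambda_lt1 m_gt0 lambda_q.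
have q_gt0 : (0 < q)%N.
  rewrite lt0n; apply: contraTneq m_gt0 => q0.
  by rewrite -(ltr_nat R) -lambda_q q0 mulr0 ltxx.
have lambda_eq : lambda = m%:R / q%:R by rewrite -lambda_q mulfK // pnatr_eq0 -lt0n.
have m_lt_q : (m < q)%N.
  by rewrite -(ltr_nat R) -lambda_q -[X in _ < X]mul1r ltr_pM2r // ltr0n.
have le_2m_n : (m.*2 <= m * q)%N by nia.
exists #|subsets (m * q) m|, #|subsets (m * q) m.*2|, (@meet_placement (m * q) m).
exists (meet_fraction (m * q) m); rewrite gain_meet_scheme // lambda_eq.
split; first exact: meet_scheme.
split; first exact: meet_cache_fraction.
split; first exact: meet_fraction_ge0.
split; first exact: meet_fraction_le.
split; last exact: central_bin_ge.
rewrite card_subsets ler_pdivlMr ?ltr0n ?fact_gt0 // -natrM -natrX ler_nat.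
by apply: bin_mul_fact_leq; rewrite m_gt0.
Qed.
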